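(* Let $c,d\geq 1$ be integers and let $\xi\in\mathbb{F}_q\setminus\{0,1\}$. Then \[ a^{(1^{c+d})_{t-\xi}}_{(1^c)_{t-\xi}\,(1^d)_{t-\xi}}=q^{cd}\begin{bmatrix} c+d\\ c\end{bmatrix}_q , \] where $\begin{bmatrix} m\\ b\end{bmatrix}_q=\frac{[m][m-1]\cdots[m-b+1]}{[b]!}$ is the $q$-binomial coefficient, with $[m]=\frac{q^m-1}{q-1}$ and $[b]!=[b][b-1]\cdots[1]$.
   Context: Let $G_n=GL_n(q)$ over the finite field $\mathbb{F}_q$, with $G_n\subset G_{n+1}$ via $g\mapsto \mathrm{diag}(g,1)$ and $G_\infty=\bigcup_n G_n$. Let $\Phi$ be the set of monic irreducible polynomials in $\mathbb{F}_q[t]$ other than $t$, and $\mathcal{P}(\Phi)$ the set of partition-valued functions $\boldsymbol{\lambda}$ on $\Phi$ with finitely many nonempty values; set $\|\boldsymbol{\lambda}\|=\sum_f \deg(f)\,|\boldsymbol{\lambda}(f)|$. Conjugacy classes of $G_n$ correspond to types $\boldsymbol{\lambda}$ with $\|\boldsymbol{\lambda}\|=n$ (via the $\mathbb{F}_q[t]$-module $\bigoplus_{f,i}\mathbb{F}_q[t]/(f)^{\boldsymbol{\lambda}_i(f)}$). The modified type of an element of type $\boldsymbol{\lambda}$ is obtained by subtracting $1$ from each part of $\boldsymbol{\lambda}(t-1)$ (keeping the other $\boldsymbol{\lambda}(f)$); elements of $G_\infty$ are conjugate iff they have the same modified type. For a modified type $\boldsymbol{\mu}$, let $K_{\boldsymbol{\mu}}(n)$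 be the sum of elements of $G_n$ of modified type $\boldsymbol{\mu}$ (zero if $\|\boldsymbol{\mu}\|+\ell(\boldsymbol{\mu}(t-1))>n$); these form a basis of the center of $\mathbb{Z}[G_n]$, and one writes $K_{\boldsymbol{\lambda}}(n)K_{\boldsymbol{\mu}}(n)=\sum_{\boldsymbol{\nu}} a^{\boldsymbol{\nu}}_{\boldsymbol{\lambda}\boldsymbol{\mu}}(n)K_{\boldsymbol{\nu}}(n)$. When $\|\boldsymbol{\nu}\|=\|\boldsymbol{\lambda}\|+\|\boldsymbol{\mu}\|$, $a^{\boldsymbol{\nu}}_{\boldsymbol{\lambda}\boldsymbol{\mu}}(n)$ is independent of $n$ and is denoted $a^{\boldsymbol{\nu}}_{\boldsymbol{\lambda}\boldsymbol{\mu}}$. For $f\in\Phi$ and a partition $\lambda$, $(\lambda)_f\in\mathcal{P}(\Phi)$ denotes the function with value $\lambda$ at $f$ and $\emptyset$ elsewhere; thus $(1^c)_{t-\xi}$ is the modified type of $\mathrm{diag}(\xi,\dots,\xi,1,\dots)$ with $c$ entries $\xi$. *)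

From HB Require Import structures.
From mathcomp Require Import all_boot all_order all_algebra all_field.
Set Implicit Arguments. Unset Strict Implicit. Unset Printing Implicit Defensive.
Import GRing.Theory Num.Theory.
Local Open Scope ring_scope.

(* G_n = GL_n(F) is realised as the invertible matrices of 'M[F]_n,
   with group law matrix multiplication. *)

Definition diag_xi (F : finFieldType) (n c : nat) (xi : F) : 'M[F]_n :=
  diag_mx (\row_(i < n) if (i < c)%N then xi else 1).

(* The set of elements of G_n of modified type (1^c)_{t-xi}: the
   G_n-conjugacy class of diag(xi^c, 1^(n-c)); empty when c > n
   (then K_{(1^c)_{t-xi}}(n) = 0). *)
Definition class_xi (F : finFieldType) (n c : nat) (xi : F) : {set 'M[F]_n} :=
  [set g : 'M[F]_n | (c <= n)%N &&
     [exists P : 'M[F]_n, (P \in unitmx) && (g == invmx P *m diag_xi n c xi *m P)]].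

(* Coefficient of the group element z in the product of the class sums
   K_lambda(n) K_mu(n) in Z[G_n], for classes A and B.  When z lies in the
   class nu, this is the structure constant a^nu_{lambda mu}(n). *)
Definition prod_coeff (F : finFieldType) (n : nat) (A B : {set 'M[F]_n})
  (z : 'M[F]_n) : nat :=
  #|[set p : 'M[F]_n * 'M[F]_n | (p.1 \in A) && (p.2 \in B) && (p.1 *m p.2 == z)]|.

Definition qint (q m : nat) : rat := ((q ^ m)%:R - 1) / (q%:R - 1).
Definition qbinom (q m b : nat) : rat :=
  (\prod_(i < b) qint q (m - i)) / (\prod_(i < b) qint q i.+1).

From mathcomp Require Import all_boot all_order all_algebra all_field.
From mathcomp Require Import zify ring.
Set Implicit Arguments. Unset Strict Implicit. Unset Printing Implicit Defensive.
Import GRing.Theory Num.Theory.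
Local Open Scope ring_scope.

(* An element X of GL_n lies in the class of diag(xi^c, 1^(n-c)) iff
   (X - 1)(X - xi) = 0 and rank (X - 1) = c.  After conjugation, z is
   diag(xi I_(c+d), I_k).  If z = g h with g, h in the classes of (1^c) and
   (1^d), the fixed row spaces of g and h have codimensions c and d, so their
   intersection is contained in, hence equal to, the k-dimensional fixed space
   of z; thus g and h fix the last k coordinate rows, and by the same argument
   for h^T g^T = z also the last k columns.  So g = diag(X, 1), h = diag(Y, 1)
   with XY = xi, and Y = xi X^-1 = (1 + xi) - X is forced.  The coefficient is
   therefore the size of the class of diag(xi^c, 1^d) in GL_(c+d), which by
   orbit-stabilizer is |GL_(c+d)| / (|GL_c| |GL_d|) = q^(cd) [c+d choose c]_q. *)

Lemma bin2D c d : 'C(c + d, 2) = ('C(c, 2) + 'C(d, 2) + c * d)%N.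
Proof.
elim: d => [|d IHd]; first by rewrite addn0 bin0n muln0 !addn0.
by rewrite addnS !binS !bin1 IHd mulnS; lia.
Qed.

Lemma prod_expn_sub1_split q c d :
  (\prod_(i < c) (q ^ (c + d - i) - 1) * \prod_(i < d) (q ^ i.+1 - 1) =
   \prod_(i < c + d) (q ^ i.+1 - 1))%N.
Proof.
rewrite [in RHS]addnC big_split_ord mulnC /=; congr (_ * _)%N.
rewrite (reindex_inj rev_ord_inj); apply: eq_bigr => i _ /=.
by congr (q ^ _ - 1)%N; have := ltn_ord i; lia.
Qed.

Definition gl_order (q n : nat) :=
  (q ^ 'C(n, 2) * \prod_(1 <= i < n.+1) (q ^ i - 1))%N.

Lemma gl_orderE q n :
  gl_order q n = (q ^ 'C(n, 2) * \prod_(i < n) (q ^ i.+1 - 1))%N.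
Proof. by rewrite /gl_order big_add1 big_mkord. Qed.

Lemma prod_expn_sub1_gt0 q n : (1 < q)%N -> (0 < \prod_(i < n) (q ^ i.+1 - 1))%N.
Proof.
by move=> q_gt1; rewrite prodn_gt0 // => i; rewrite subn_gt0 -(exp1n i.+1) ltn_exp2r.
Qed.

Lemma gl_order_gt0 q n : (1 < q)%N -> (0 < gl_order q n)%N.
Proof.
by move=> q_gt1; rewrite gl_orderE muln_gt0 expn_gt0 prod_expn_sub1_gt0 // ltnW.
Qed.

Lemma prod_qint q c (f : nat -> nat) : (1 < q)%N ->
  \prod_(i < c) qint q (f i) = (\prod_(i < c) (q ^ f i - 1))%N%:R / (q%:R - 1) ^+ c.
Proof.
move=> q_gt1; rewrite /qint prodf_div prodr_const card_ord natr_prod.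
by congr (_ / _); apply: eq_bigr => i _; rewrite natrB // expn_gt0 ltnW.
Qed.

Lemma qbinomE q c d : (1 < q)%N ->
  qbinom q (c + d) c = (\prod_(i < c) (q ^ (c + d - i) - 1))%N%:R /
                       (\prod_(i < c) (q ^ i.+1 - 1))%N%:R.
Proof.
move=> q_gt1; rewrite /qbinom !prod_qint // invf_div mulrA divfK //.
by rewrite expf_neq0 // subr_eq0 pnatr_eq1 gtn_eqF.
Qed.

Lemma gl_order_add q c d : (1 < q)%N ->
  (gl_order q (c + d))%:R =
  (q ^ (c * d))%:R * qbinom q (c + d) c * (gl_order q c * gl_order q d)%:R :> rat.
Proof.
move=> q_gt1; rewrite qbinomE // !gl_orderE bin2D -prod_expn_sub1_split !expnD !natrM.
have : (\prod_(i < c) (q ^ i.+1 - 1))%N%:R != 0 :> rat.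
  by rewrite pnatr_eq0 -lt0n prod_expn_sub1_gt0.
by move=> ?; field.
Qed.

Section MatrixFacts.
Variable F : fieldType.
Implicit Types (a b : F) (n : nat).

Lemma mulmx_sub_scalarC n (X : 'M[F]_n) a b :
  (X - a%:M) *m (X - b%:M) = (X - b%:M) *m (X - a%:M).
Proof.
rewrite !mulmxBl !mulmxBr !mul_mx_scalar !mul_scalar_mx !scale_scalar_mx mulrC.
by rewrite !opprB !addrA [LHS]addrAC [RHS]addrAC [_ - _ *: X]addrAC.
Qed.

Lemma mulmx_sub_scalar_root n (X : 'M[F]_n) a b : (X - a%:M) *m (X - b%:M) = 0 ->
  X *m ((a + b)%:M - X) = (a * b)%:M.
Proof.
move=> X0; apply/eqP; rewrite -subr_eq0 -oppr_eq0 -X0 !mulmxBr !mulmxBl.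
rewrite !mul_mx_scalar !mul_scalar_mx scale_scalar_mx scalerDl opprB !opprD !opprK.
by rewrite addrC !addrA [X *m X - _]addrC [- _ + _ - _]addrAC mulrC.
Qed.

Lemma block_mx_sub_scalar m1 m2 (A : 'M[F]_m1) B C (D : 'M[F]_m2) a :
  block_mx A B C D - a%:M = block_mx (A - a%:M) B C (D - a%:M).
Proof.
by rewrite [a%:M]scalar_mx_block opp_block_mx add_block_mx !oppr0 !addr0.
Qed.

Lemma mxrank_scalar n a : a != 0 -> \rank (a%:M : 'M[F]_n) = n.
Proof.
by move=> a0; rewrite mxrank_unit // unitmxE det_scalar unitfE expf_neq0.
Qed.

Lemma scalemx_fixed0 m n a (v : 'M[F]_(m, n)) : a != 1 -> a *: v = v -> v = 0.
Proof.
move=> a1 /eqP; rewrite -{2}[v]scale1r -subr_eq0 -scalerBl scalemx_eq0 subr_eq0.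
by rewrite (negbTE a1) => /eqP.
Qed.

Lemma capmx_ker_sub_scalar n (X : 'M[F]_n) a b : a != b ->
  (kermx (X - a%:M) :&: kermx (X - b%:M))%MS = 0.
Proof.
move=> ab; set S := (_ :&: _)%MS.
have Sa : S *m (X - a%:M) = 0 by apply/eqP; rewrite -sub_kermx capmxSl.
have Sb : S *m (X - b%:M) = 0 by apply/eqP; rewrite -sub_kermx capmxSr.
have : S *m ((X - a%:M) - (X - b%:M)) = 0 by rewrite mulmxBr Sa Sb subr0.
rewrite opprB addrC addrA subrK -raddfB /= mul_mx_scalar => /eqP.
by rewrite scalemx_eq0 subr_eq0 eq_sym (negbTE ab) => /eqP.
Qed.

Lemma mxrank_sub_scalar_add n (X : 'M[F]_n) a b : a != b ->
  (X - a%:M) *m (X - b%:M) = 0 -> addn (\rank (X - a%:M)) (\rank (X - b%:M)) = n.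
Proof.
move=> ab Xab0.
have sub_ker_b : (X - a%:M <= kermx (X - b%:M))%MS by rewrite sub_kermx Xab0.
have sub_ker_a : (X - b%:M <= kermx (X - a%:M))%MS.
  by rewrite sub_kermx mulmx_sub_scalarC Xab0.
have := mxrankS sub_ker_a; have := mxrankS sub_ker_b.
have := mxrank_sum_cap (kermx (X - a%:M)) (kermx (X - b%:M)).
have := rank_leq_col (kermx (X - a%:M) + kermx (X - b%:M))%MS.
rewrite capmx_ker_sub_scalar // mxrank0 !mxrank_ker.
have := rank_leq_row (X - a%:M); have := rank_leq_row (X - b%:M).
lia.
Qed.

Lemma conjmx_sub_scalar n (P A : 'M[F]_n) a : P \in unitmx ->
  invmx P *m A *m P - a%:M = invmx P *m (A - a%:M) *m P.
Proof.
move=> uP; rewrite mulmxBr mulmxBl mul_mx_scalar -scalemxAl mulVmx //.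
by rewrite scalemx1.
Qed.

Lemma conjmx_mul n (P A B : 'M[F]_n) : P \in unitmx ->
  invmx P *m A *m P *m (invmx P *m B *m P) = invmx P *m (A *m B) *m P.
Proof. by move=> uP; rewrite !mulmxA mulmxK. Qed.

Lemma conjmx_inj n (P : 'M[F]_n) : P \in unitmx ->
  injective (fun A => invmx P *m A *m P).
Proof.
move=> uP A B /(congr1 (fun M => P *m M *m invmx P)) /=.
by rewrite !mulmxA !mulmxK // mulmxV // !mul1mx.
Qed.

Lemma conjmx_eq0 n (P A : 'M[F]_n) : P \in unitmx ->
  (invmx P *m A *m P == 0) = (A == 0).
Proof. by move=> uP; rewrite -(inj_eq (conjmx_inj uP) A 0) mulmx0 mul0mx. Qed.

Lemma mxrank_conjmx n (P A : 'M[F]_n) : P \in unitmx ->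
  \rank (invmx P *m A *m P) = \rank A.
Proof.
move=> uP; rewrite mxrankMfree ?row_free_unit //.
by rewrite eqmxMfull // row_full_unit unitmx_inv.
Qed.

Lemma fixed_kermx_sub1 m n (S : 'M[F]_(m, n)) g :
  (S <= kermx (g - 1%:M))%MS -> S *m g = S.
Proof. by rewrite sub_kermx mulmxBr mulmx1 subr_eq0 => /eqP. Qed.

Lemma block_mx_fixed_bottom m k (g : 'M[F]_(m + k)) :
  (row_mx 0 1%:M : 'M_(k, m + k)) *m g = row_mx 0 1%:M ->
  (row_mx 0 1%:M : 'M_(k, m + k)) *m g^T = row_mx 0 1%:M ->
  g = block_mx (ulsubmx g) 0 0 1%:M.
Proof.
rewrite -[g]submxK tr_block_mx !mul_row_block !mul0mx !add0r !mul1mx.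
move=> /eq_row_mx [-> ->] /eq_row_mx [/(congr1 trmx)]; rewrite trmxK trmx0 => -> _.
by rewrite block_mxKul.
Qed.

Lemma exists_row_base m n (A : 'M[F]_(m, n)) r : \rank A = r ->
  exists B : 'M_(r, n), (B :=: A)%MS.
Proof. by move=> <-; exists (row_base A); apply: eq_row_base. Qed.

End MatrixFacts.

Section ConjugacyClassCard.
Variable F : finFieldType.

Definition unitmx_set n := [set P : 'M[F]_n | P \in unitmx].

Lemma card_unitmx_set n : (0 < n)%N -> #|unitmx_set n| = gl_order #|F| n.
Proof.
case: n => // n _; rewrite /gl_order -card_GL // cardsT /= card_sub.
by apply: eq_card => A; rewrite !inE.
Qed.

Lemma invmx_mul n (A B : 'M[F]_n) : A \in unitmx -> B \in unitmx ->
  invmx (A *m B) = invmx B *m invmx A.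
Proof.
move=> uA uB; have uAB : A *m B \in unitmx by rewrite unitmx_mul uA.
rewrite -[RHS](mulmxK uAB) mulmxA -[invmx B *m _ *m A]mulmxA mulVmx //.
by rewrite mulmx1 mulVmx // mul1mx.
Qed.

Lemma card_conjmx_fiber n (D P0 : 'M[F]_n) : P0 \in unitmx ->
  #|[set P in unitmx_set n | invmx P *m D *m P == invmx P0 *m D *m P0]| =
  #|[set Q in unitmx_set n | Q *m D == D *m Q]|.
Proof.
move=> uP0; have mulP0_inj : injective (fun Q : 'M[F]_n => Q *m P0).
  by apply: (can_inj (g := fun Q => Q *m invmx P0)) => Q; rewrite mulmxK.
rewrite -[RHS](card_imset _ mulP0_inj); apply: eq_card => P; apply/idP/idP.
  rewrite !inE => /andP [uP /eqP eP]; apply/imsetP.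
  exists (P *m invmx P0); last by rewrite mulmxKV.
  rewrite !inE unitmx_mul uP unitmx_inv uP0 /=.
  have := congr1 (fun M => P *m M *m invmx P0) eP.
  by rewrite /= !mulmxA mulmxV // mul1mx mulmxK // => ->.
case/imsetP=> Q; rewrite !inE => /andP [uQ /eqP cQ] ->.
rewrite unitmx_mul uQ uP0 invmx_mul // !mulmxA -[invmx P0 *m _ *m D *m Q]mulmxA.
by rewrite -cQ -[invmx P0 *m _ *m (Q *m D)]mulmxA mulKmx // eqxx.
Qed.

Lemma card_conjmx_orbit n (D : 'M[F]_n) :
  (#|[set invmx P *m D *m P | P in unitmx_set n]| *
   #|[set Q in unitmx_set n | Q *m D == D *m Q]|)%N = #|unitmx_set n|.
Proof.
rewrite -[#|unitmx_set n|]sum1_card (partition_big (fun P => invmx P *m D *m P)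
  (mem [set invmx P *m D *m P | P in unitmx_set n])) /=; last first.
  by move=> P uP; apply: imset_f.
rewrite -sum_nat_const; apply: eq_bigr => _ /imsetP [P0 uP0 ->].
rewrite inE in uP0; rewrite -(card_conjmx_fiber D uP0) -sum1_card.
by apply: eq_bigl => P; rewrite !inE.
Qed.

Definition conj_closed n (A : {set 'M[F]_n}) :=
  forall P g, P \in unitmx -> (invmx P *m g *m P \in A) = (g \in A).

Lemma prod_coeff_conj_le n (A B : {set 'M[F]_n}) z Q :
  conj_closed A -> conj_closed B ->
  Q \in unitmx -> (prod_coeff A B z <= prod_coeff A B (invmx Q *m z *m Q))%N.
Proof.
move=> conjA conjB uQ; pose f p := (invmx Q *m p.1 *m Q, invmx Q *m p.2 *m Q).
have f_inj : injective f.
  by move=> [g h] [g' h'] [] /(conjmx_inj uQ) -> /(conjmx_inj uQ) ->.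
rewrite /prod_coeff -(card_imset _ f_inj); apply: subset_leq_card.
apply/subsetP => _ /imsetP [[g h] + ->]; rewrite !inE /= conjA // conjB //.
by rewrite conjmx_mul // => /andP [-> /eqP ->]; rewrite eqxx.
Qed.

Lemma prod_coeff_conj n (A B : {set 'M[F]_n}) z Q :
  conj_closed A -> conj_closed B ->
  Q \in unitmx -> prod_coeff A B (invmx Q *m z *m Q) = prod_coeff A B z.
Proof.
move=> conjA conjB uQ; apply/eqP; rewrite eqn_leq prod_coeff_conj_le // andbT.
have uQV : invmx Q \in unitmx by rewrite unitmx_inv.
have := prod_coeff_conj_le (invmx Q *m z *m Q) conjA conjB uQV.
by rewrite invmxK !mulmxA mulmxV // mul1mx mulmxK.
Qed.

End ConjugacyClassCard.

Section XiClass.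
Variables (F : finFieldType) (xi : F).
Hypotheses (xi_neq0 : xi != 0) (xi_neq1 : xi != 1).

Definition xi_type n c (X : 'M[F]_n) :=
  ((X - 1%:M) *m (X - xi%:M) == 0) && (\rank (X - 1%:M) == c).

Lemma diag_xi_block c d : diag_xi (c + d) c xi = block_mx xi%:M 0 0 1%:M.
Proof.
apply/matrixP => i j; rewrite /diag_xi !mxE -val_eqE /=.
case: splitP => i' ->; rewrite !mxE; case: splitP => j' ->; rewrite !mxE ?ltn_ord.
- by rewrite val_eqE.
- by rewrite (ltn_eqF (leq_trans (ltn_ord i') (leq_addr _ _))).
- by rewrite (gtn_eqF (leq_trans (ltn_ord j') (leq_addr _ _))).
- by rewrite eqn_add2l val_eqE.
Qed.

Lemma xi_type_conj n c (P X : 'M[F]_n) : P \in unitmx ->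
  xi_type c (invmx P *m X *m P) = xi_type c X.
Proof.
move=> uP; rewrite /xi_type !conjmx_sub_scalar // conjmx_mul //.
by rewrite conjmx_eq0 // mxrank_conjmx.
Qed.

Lemma xi_type_tr n c (X : 'M[F]_n) : xi_type c X^T = xi_type c X.
Proof.
have trB a : X^T - a%:M = (X - a%:M)^T by rewrite linearB /= tr_scalar_mx.
by rewrite /xi_type !trB -trmx_mul trmx_eq0 mxrank_tr mulmx_sub_scalarC.
Qed.

Lemma xi_type_block n k c (X : 'M[F]_n) :
  xi_type c (block_mx X 0 0 (1%:M : 'M_k)) = xi_type c X.
Proof.
rewrite /xi_type !block_mx_sub_scalar subrr mulmx_block !mulmx0 !mul0mx !addr0.
rewrite rank_diag_block_mx mxrank0 addn0 -(@block_mx0 _ n k n k).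
by apply/andP/andP => [[/eqP /eq_block_mx [-> _ _ _] ->] | [/eqP -> ->]].
Qed.

Lemma xi_type_diag c d : xi_type c (block_mx (xi%:M : 'M_c) 0 0 (1%:M : 'M_d)).
Proof.
rewrite xi_type_block /xi_type subrr mulmx0 eqxx -raddfB /= mxrank_scalar //.
by rewrite subr_eq0.
Qed.

Lemma xi_type_conj_diag c d (X : 'M[F]_(c + d)) : xi_type c X ->
  exists2 P, P \in unitmx & X = invmx P *m block_mx xi%:M 0 0 1%:M *m P.
Proof.
case/andP => /eqP X0 /eqP rk1.
have rk_sum : addn (\rank (X - 1%:M)) (\rank (X - xi%:M)) = (c + d)%N.
  by apply: mxrank_sub_scalar_add; rewrite // eq_sym.
have [Bx eqBx] : exists B : 'M_(c, c + d), (B :=: kermx (X - xi%:M))%MS.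
  by apply: exists_row_base; rewrite mxrank_ker; lia.
have [B1 eqB1] : exists B : 'M_(d, c + d), (B :=: kermx (X - 1%:M))%MS.
  by apply: exists_row_base; rewrite mxrank_ker; lia.
have BxX : Bx *m X = xi *: Bx.
  by apply/eqP; rewrite -mul_mx_scalar -subr_eq0 -mulmxBr -sub_kermx eqBx.
have B1X : B1 *m X = B1.
  by apply/eqP; rewrite -[B1 in _ == B1]mulmx1 -subr_eq0 -mulmxBr -sub_kermx eqB1.
set P := col_mx Bx B1.
have PX : P *m X = block_mx xi%:M 0 0 1%:M *m P.
  by rewrite mul_col_mx mul_block_col !mul0mx addr0 add0r mul1mx BxX B1X mul_scalar_mx.
have uP : P \in unitmx.
  rewrite -row_free_unit /row_free -addsmxE.
  have := mxrank_sum_cap Bx B1.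
  have : (Bx :&: B1 <= kermx (X - xi%:M) :&: kermx (X - 1%:M))%MS.
    by apply: capmxS; rewrite ?eqBx ?eqB1.
  rewrite capmx_ker_sub_scalar // submx0 => /eqP ->; rewrite mxrank0 addn0 => ->.
  by rewrite eqBx eqB1 !mxrank_ker; apply/eqP; lia.
by exists P => //; rewrite -mulmxA -PX mulKmx.
Qed.

Lemma class_xiE n c (X : 'M[F]_n) : (X \in class_xi n c xi) = xi_type c X.
Proof.
rewrite inE; case: (leqP c n) => [le_cn | lt_nc] /=; last first.
  by rewrite /xi_type (ltn_eqF (leq_ltn_trans (rank_leq_row _) lt_nc)) andbF.
move: X; rewrite -(subnKC le_cn) => X; rewrite diag_xi_block.
apply/existsP/idP => [[P /andP [uP /eqP ->]] | /xi_type_conj_diag [P uP ->]].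
  by rewrite xi_type_conj // xi_type_diag.
by exists P; rewrite uP eqxx.
Qed.

Lemma class_xi_conj_closed n c : conj_closed (class_xi n c xi).
Proof. by move=> P X uP; rewrite !class_xiE // xi_type_conj. Qed.

Lemma xi_type_complement c d (X : 'M[F]_(c + d)) :
  xi_type c X -> xi_type d ((1 + xi)%:M - X).
Proof.
case/andP => /eqP X0 /eqP rk1.
have rk_sum : addn (\rank (X - 1%:M)) (\rank (X - xi%:M)) = (c + d)%N.
  by apply: mxrank_sub_scalar_add; rewrite // eq_sym.
rewrite /xi_type; have -> : (1 + xi)%:M - X - 1%:M = - (X - xi%:M).
  by rewrite raddfD /= addrAC [1%:M + _]addrC addrK opprB.
have -> : (1 + xi)%:M - X - xi%:M = - (X - 1%:M).
  by rewrite raddfD /= addrAC addrK opprB.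
rewrite mulNmx mulmxN opprK mulmx_sub_scalarC X0 eqxx mxrank_opp /=.
by apply/eqP; lia.
Qed.

Lemma xi_type_factors_fix_bottom m k c d (g h : 'M[F]_(m + k)) : (c + d <= m)%N ->
  xi_type c g -> xi_type d h -> g *m h = block_mx xi%:M 0 0 1%:M ->
  (row_mx 0 1%:M : 'M_(k, m + k)) *m g = row_mx 0 1%:M /\
  (row_mx 0 1%:M : 'M_(k, m + k)) *m h = row_mx 0 1%:M.
Proof.
move=> le_cd_m /andP [_ /eqP rk_g] /andP [_ /eqP rk_h] gh.
set Fg := kermx (g - 1%:M); set Fh := kermx (h - 1%:M).
set Fz := kermx (block_mx xi%:M 0 0 1%:M - (1%:M : 'M[F]_(m + k))).
have FgFh_z : (Fg :&: Fh <= Fz)%MS.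
  rewrite sub_kermx -gh mulmxBr mulmxA (fixed_kermx_sub1 (capmxSl _ _)).
  by rewrite (fixed_kermx_sub1 (capmxSr _ _)) mulmx1 subrr.
have rk_z : \rank Fz = k.
  rewrite mxrank_ker block_mx_sub_scalar subrr rank_diag_block_mx mxrank0 addn0.
  by rewrite -raddfB mxrank_scalar ?subr_eq0 //; lia.
have Fz_FgFh : (Fz <= Fg :&: Fh)%MS.
  rewrite -(mxrank_leqif_sup FgFh_z).2 eqn_leq mxrankS //= rk_z.
  have := mxrank_sum_cap Fg Fh; have := rank_leq_col (Fg + Fh)%MS.
  by rewrite !mxrank_ker rk_g rk_h; lia.
have W_Fz : ((row_mx 0 1%:M : 'M_(k, m + k)) <= Fz)%MS.
  rewrite sub_kermx block_mx_sub_scalar !subrr mul_row_block !mulmx0 !mul0mx.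
  by rewrite !addr0 row_mx0.
by split; apply/fixed_kermx_sub1/(submx_trans W_Fz)/(submx_trans Fz_FgFh);
  [exact: capmxSl | exact: capmxSr].
Qed.

Lemma xi_type_factors_block_diag c d k (g h : 'M[F]_(c + d + k)) :
  xi_type c g -> xi_type d h -> g *m h = block_mx xi%:M 0 0 1%:M ->
  g = block_mx (ulsubmx g) 0 0 1%:M /\ h = block_mx (ulsubmx h) 0 0 1%:M.
Proof.
move=> tg th gh; have [g_rows h_rows] := xi_type_factors_fix_bottom (leqnn _) tg th gh.
have [h_cols g_cols] : (row_mx 0 1%:M : 'M_(k, c + d + k)) *m h^T = row_mx 0 1%:M /\
                       (row_mx 0 1%:M : 'M_(k, c + d + k)) *m g^T = row_mx 0 1%:M.
  apply: (xi_type_factors_fix_bottom (c := d) (d := c)); rewrite ?xi_type_tr //.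
    by rewrite addnC.
  by rewrite -trmx_mul gh tr_block_mx !trmx0 !tr_scalar_mx.
by split; apply: block_mx_fixed_bottom.
Qed.

Lemma prod_coeff_block_diag c d k :
  prod_coeff (class_xi (c + d + k) c xi) (class_xi (c + d + k) d xi)
    (block_mx xi%:M 0 0 1%:M) = #|class_xi (c + d) c xi|.
Proof.
pose f (X : 'M[F]_(c + d)) :=
  (block_mx X 0 0 (1%:M : 'M_k), block_mx ((1 + xi)%:M - X) 0 0 (1%:M : 'M_k)).
have f_inj : injective f by move=> X Y [] /eq_block_mx [].
rewrite /prod_coeff -(card_imset _ f_inj); apply: eq_card => -[g h].
rewrite inE /= !class_xiE //; apply/idP/imsetP => [/andP [/andP [tg th] /eqP gh] |].
  have [eg eh] := xi_type_factors_block_diag tg th gh.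
  move: tg th gh; rewrite eg eh; move: (ulsubmx g) (ulsubmx h) => X Y.
  rewrite !xi_type_block mulmx_block !mulmx0 !mul0mx !addr0 mulmx1.
  move=> tX _ /eq_block_mx [XY _ _ _]; exists X; first by rewrite class_xiE.
  have [uX _] : X \in unitmx /\ xi^-1 *: Y \in unitmx.
    by apply: mulmx1_unit; rewrite -scalemxAr XY scale_scalar_mx mulVf.
  have /andP [/eqP X0 _] := tX.
  have := mulmx_sub_scalar_root X0; rewrite mul1r -XY => /(congr1 (mulmx (invmx X))).
  by rewrite !mulKmx // => <-.
case=> X; rewrite class_xiE // => tX [-> ->]; have /andP [/eqP X0 _] := tX.
rewrite !xi_type_block tX (xi_type_complement tX) mulmx_block !mulmx0 !mul0mx.
by rewrite !addr0 add0r mulmx1 (mulmx_sub_scalar_root X0) mul1r eqxx.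
Qed.

Lemma class_xi_conj_orbit c d : class_xi (c + d) c xi =
  [set invmx P *m block_mx xi%:M 0 0 1%:M *m P | P in unitmx_set F (c + d)].
Proof.
apply/setP => X; rewrite inE leq_addr diag_xi_block /=; apply/existsP/imsetP.
  by case=> P /andP [uP /eqP ->]; exists P; rewrite ?inE.
by case=> P; rewrite inE => uP ->; exists P; rewrite uP eqxx.
Qed.

Lemma card_centralizer_diag_xi c d :
  #|[set Q in unitmx_set F (c + d) |
     Q *m block_mx xi%:M 0 0 1%:M == block_mx xi%:M 0 0 1%:M *m Q]| =
  (#|unitmx_set F c| * #|unitmx_set F d|)%N.
Proof.
rewrite -cardsX.
have diag_inj : injective (fun p : 'M[F]_c * 'M[F]_d => block_mx p.1 0 0 p.2).
  by move=> [a b] [a' b'] /eq_block_mx [/= -> _ _ ->].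
rewrite -(card_imset _ diag_inj); apply: eq_card => Q; rewrite !inE.
apply/andP/imsetP => [[]|[[a b]]]; last first.
  rewrite !inE /= => /andP [ua ub] ->.
  rewrite unitmxE det_ublock unitrM -!unitmxE ua ub !mulmx_block !mulmx0 !mul0mx.
  by rewrite !addr0 !add0r mulmx1 mul1mx scalar_mxC.
rewrite -[Q]submxK !mulmx_block !mulmx0 !mul0mx !mulmx1 !mul1mx !addr0 !add0r.
move=> uQ /eqP /eq_block_mx [_ ur dl _].
rewrite mul_scalar_mx in ur; rewrite mul_mx_scalar in dl.
rewrite (scalemx_fixed0 xi_neq1 (esym ur)) (scalemx_fixed0 xi_neq1 dl) in uQ *.
move: uQ; rewrite unitmxE det_ublock unitrM -!unitmxE => /andP [ua ub].
by exists (ulsubmx Q, drsubmx Q); rewrite // !inE ua.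
Qed.

Lemma card_class_xi c d : (0 < c)%N -> (0 < d)%N ->
  (#|class_xi (c + d) c xi| * (gl_order #|F| c * gl_order #|F| d))%N =
  gl_order #|F| (c + d).
Proof.
move=> c_gt0 d_gt0; rewrite -!card_unitmx_set ?addn_gt0 ?c_gt0 //.
by rewrite -(card_centralizer_diag_xi c d) class_xi_conj_orbit card_conjmx_orbit.
Qed.

Lemma card_class_xi_qbinom c d : (0 < c)%N -> (0 < d)%N ->
  (#|class_xi (c + d) c xi|%:R : rat) = (#|F| ^ (c * d))%:R * qbinom #|F| (c + d) c.
Proof.
move=> c_gt0 d_gt0; have q_gt1 := card_finNzRing_gt1 F.
have := congr1 (fun m => m%:R : rat) (card_class_xi c_gt0 d_gt0).
rewrite /= gl_order_add // natrM => /mulIf -> //.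
by rewrite pnatr_eq0 -lt0n muln_gt0 !gl_order_gt0.
Qed.

End XiClass.

Unset Implicit Arguments.

Theorem proposition4p6 (F : finFieldType) (xi : F) (c d : nat) :
  (1 <= c)%N -> (1 <= d)%N -> xi != 0 -> xi != 1 ->
  forall (n : nat), (c + d <= n)%N ->
  forall z : 'M[F]_n, z \in class_xi n (c + d) xi ->
  ((prod_coeff (class_xi n c xi) (class_xi n d xi) z)%:R : rat)
    = (#|F| ^ (c * d))%:R * qbinom #|F| (c + d) c.
Proof.
move=> c_gt0 d_gt0 xi_neq0 xi_neq1 n le_cd_n.
rewrite -(subnKC le_cd_n); move: (n - (c + d))%N => k z.
rewrite class_xiE // => /(xi_type_conj_diag xi_neq0 xi_neq1) [P uP ->].
rewrite prod_coeff_conj ?prod_coeff_block_diag ?card_class_xi_qbinom //;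
  exact: class_xi_conj_closed.
Qed.
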